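(* Let $\vec p,\vec s$ be $n$-tuples with entries in $[1,\infty]$ and let $\alpha$ satisfy $0\le\frac1n\sum_{i=1}^n\frac1{s_i}\le\frac1\alpha\le\frac1n\sum_{i=1}^n\frac1{p_i}<1$. Then there is a constant $C>0$ such that for every ball $B(x_0,r_0)\subset\mathbb R^n$, $$\|\chi_{B(x_0,r_0)}\|_{(L^{\vec p},L^{\vec s})^{\alpha}}\le C\,r_0^{n/\alpha}\quad\text{and}\quad\|\chi_{B(x_0,r_0)}\|_{\mathcal H(\vec p\,',\vec s\,',\alpha')}\le C\,r_0^{n/\alpha'}.$$
   Context: For $\vec p=(p_1,\dots,p_n)$, $\|f\|_{L^{\vec p}}=\Big(\int_{\mathbb R}\cdots\Big(\int_{\mathbb R}|f(x)|^{p_1}\,dx_1\Big)^{p_2/p_1}\cdots dx_n\Big)^{1/p_n}$ (usual modification when some exponent is $\infty$); primes denote conjugate exponents ($1/p_i+1/p_i'=1$, $1/\alpha+1/\alpha'=1$). $B(y,r)$ is the open ball of center $y$, radius $r$, $\chi_E$ the characteristic function of $E$. $\|f\|_{(L^{\vec p},L^{\vec s})^{\alpha}}:=\sup_{r>0}\Big\|\,y\mapsto |B(y,r)|^{\frac1\alpha-\frac1n\sum_{i}\frac1{p_i}-\frac1n\sum_{i}\frac1{s_i}}\|f\chi_{B(y,r)}\|_{L^{\vec p}}\Big\|_{L^{\vec s}}$ (outer norm in $y$). For $k\in\mathbb Z^n$ let $Q_{1,k}=k+[0,1)^n$, $\|\{a_k\}\|_{\ell^{\vec s}}=\Big(\sum_{k_n}\cdots\Big(\sum_{k_1}|a_k|^{s_1}\Big)^{s_2/s_1}\cdots\Big)^{1/s_n}$,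 and $\|f\|_{\vec p\,',\vec s\,'}=\big\|\{\|f\chi_{Q_{1,k}}\|_{L^{\vec p\,'}}\}_k\big\|_{\ell^{\vec s\,'}}$; $(L^{\vec p\,'},\ell^{\vec s\,'})(\mathbb R^n)$ is the set of $f\in L^1_{loc}$ with $\|f\|_{\vec p\,',\vec s\,'}<\infty$. For $r>0$, $St^{(\alpha')}_rf(x)=r^{-n/\alpha'}f(x/r)$. $\mathcal H(\vec p\,',\vec s\,',\alpha')$ is the set of $f\in L^1_{loc}(\mathbb R^n)$ admitting a sequence $\{(c_j,r_j,f_j)\}_{j\ge1}\subset\mathbb C\times(0,\infty)\times(L^{\vec p\,'},\ell^{\vec s\,'})(\mathbb R^n)$ with $f=\sum_jc_jSt^{(\alpha')}_{r_j}(f_j)$ in $L^1_{loc}$, $\|f_j\|_{\vec p\,',\vec s\,'}\le1$, and $\sum_j|c_j|<\infty$; $\|f\|_{\mathcal H(\vec p\,',\vec s\,',\alpha')}$ is the infimum of $\sum_j|c_j|$ over all such sequences. *)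

From HB Require Import structures.
From mathcomp Require Import all_boot all_order all_algebra.
From mathcomp Require Import all_classical all_reals all_analysis.
From mathcomp Require Import ess_sup_inf complex.

Set Implicit Arguments.
Unset Strict Implicit.
Unset Printing Implicit Defensive.

Import Order.TTheory GRing.Theory Num.Theory.
Import numFieldNormedType.Exports.

Local Open Scope classical_set_scope.
Local Open Scope ring_scope.

Section MixedNorms.
Variable R : realType.

Definition Rn (n : nat) := 'I_n -> R.
Definition Zn (n : nat) := 'I_n -> int.

Definition cabs (z : R[i]) : R := Normc.normc z.

Definition inv_exp (p : \bar R) : R :=
  match p with (r%:E)%E => r^-1 | _ => 0 end.

Definition conj_exp (p : \bar R) : \bar R :=
  match p with
  | (r%:E)%E => if r == 1 then (+oo)%E else ((r / (r - 1))%:E)%E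
  | (+oo)%E => 1%E
  | (-oo)%E => (-oo)%E
  end.

(* k-th exponent of a vector of exponents (k < n; junk value 1 otherwise) *)
Definition exp_at n (p : 'I_n -> \bar R) (k : nat) : \bar R :=
  match (insub k : option 'I_n) with Some i => p i | None => 1%E end.

Definition upd n (T : Type) (x : 'I_n -> T) (k : nat) (t : T) : 'I_n -> T :=
  fun i => if val i == k then t else x i.

Definition Lp1 (p : \bar R) (g : R -> \bar R) : \bar R :=
  match p with
  | (+oo)%E => ess_sup (@lebesgue_measure R) g
  | _ => ((\int[@lebesgue_measure R]_(t in setT) (poweR (g t) (fine p)))
           `^ (fine p)^-1)%E
  end.

Definition lp1 (p : \bar R) (a : int -> \bar R) : \bar R :=
  match p with
  | (+oo)%E => ereal_sup (range a)
  | _ => ((\esum_(k in [set: int]) (poweR (a k) (fine p))) `^ (fine p)^-1)%E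
  end.

(* iterated norm: after step k, variables x_0..x_{k-1} have been normed
   (innermost first, i.e. x_1 with p_1 in the paper's indexing). *)
Fixpoint iter_norm n (T : Type) (agg : \bar R -> (T -> \bar R) -> \bar R)
    (p : 'I_n -> \bar R) (g : ('I_n -> T) -> \bar R) (k : nat)
    : ('I_n -> T) -> \bar R :=
  match k with
  | 0%N => g
  | k'.+1 => fun x =>
      agg (exp_at p k') (fun t => iter_norm agg p g k' (upd x k' t))
  end.

Definition mixedL n (p : 'I_n -> \bar R) (g : Rn n -> \bar R) : \bar R :=
  iter_norm Lp1 p g n (fun=> 0).

Definition mixedl n (s : 'I_n -> \bar R) (a : Zn n -> \bar R) : \bar R :=
  iter_norm lp1 s a n (fun=> 0).

Definition eball n (y : Rn n) (r : R) : set (Rn n) :=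
  [set x | \sum_(i < n) (x i - y i) ^+ 2 < r ^+ 2].

(* n-dimensional Lebesgue measure of a set (iterated integral of its
   indicator, Tonelli) *)
Definition vol n (A : set (Rn n)) : \bar R :=
  @mixedL n (fun=> 1%E) (fun x => (\1_A x)%:E).

Definition normL_on n (p : 'I_n -> \bar R) (f : Rn n -> R[i]) (A : set (Rn n)) :=
  mixedL p (fun x => (cabs (f x) * \1_A x)%:E).

Definition morrey_norm n (p s : 'I_n -> \bar R) (alpha : \bar R)
    (f : Rn n -> R[i]) : \bar R :=
  let e := inv_exp alpha - (\sum_(i < n) inv_exp (p i)) / n%:R
                         - (\sum_(i < n) inv_exp (s i)) / n%:R in
  ereal_sup [set mixedL s (fun y =>
                  (poweR (vol (eball y r)) e * normL_on p f (eball y r))%E)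
            | r in [set r : R | 0 < r]].

Definition cube n (k : Zn n) : set (Rn n) :=
  [set x | forall i, (k i)%:~R <= x i < (k i)%:~R + 1].

Definition amalgam_norm n (p s : 'I_n -> \bar R) (f : Rn n -> R[i]) : \bar R :=
  mixedl s (fun k => normL_on p f (cube k)).

Definition boxes n : set (set (Rn n)) :=
  [set A | exists a b : Rn n, A = [set x | forall i, a i < x i < b i]].
Definition borel_Rn n (A : set (Rn n)) : Prop := <<s @boxes n >> A.
Definition measurable_Rn n (g : Rn n -> R) : Prop :=
  forall B : set R, measurable B -> borel_Rn (g @^-1` B).

Definition L1loc n (f : Rn n -> R[i]) : Prop :=
  [/\ measurable_Rn (fun x => complex.Re (f x)),
      measurable_Rn (fun x => complex.Im (f x)) &
      forall rho : R, 0 < rho -> (normL_on (fun=> 1%E) f (eball (fun=> 0%R) rho) < +oo)%E].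

Definition amalgam_space n (p s : 'I_n -> \bar R) (f : Rn n -> R[i]) : Prop :=
  L1loc f /\ (amalgam_norm p s f < +oo)%E.

Definition St n (beta : \bar R) (r : R) (f : Rn n -> R[i]) : Rn n -> R[i] :=
  fun x => ((r `^ (- (n%:R * inv_exp beta)))%:C)%C * f (fun i => x i / r).

Definition cvg_L1loc n (S : nat -> Rn n -> R[i]) (f : Rn n -> R[i]) : Prop :=
  forall rho : R, 0 < rho ->
    (fun N => normL_on (fun=> 1%E) (fun x => f x - S N x) (eball (fun=> 0%R) rho))
      @ \oo --> 0%E.

(* admissible decompositions for H(p', s', alpha') with
   (p', s', alpha') = (q, t, beta) *)
Definition H_decomp n (q t : 'I_n -> \bar R) (beta : \bar R)
    (f : Rn n -> R[i]) (c : nat -> R[i]) (r : nat -> R)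
    (fs : nat -> Rn n -> R[i]) : Prop :=
  [/\ forall j, 0 < r j,
      forall j, amalgam_space q t (fs j),
      forall j, (amalgam_norm q t (fs j) <= 1)%E,
      (\sum_(j <oo) (cabs (c j))%:E < +oo)%E &
      cvg_L1loc (fun N x => \sum_(j < N) c j * St beta (r j) (fs j) x) f].

Definition H_norm n (q t : 'I_n -> \bar R) (beta : \bar R)
    (f : Rn n -> R[i]) : \bar R :=
  ereal_inf [set S | exists c r fs,
     H_decomp q t beta f c r fs /\ S = (\sum_(j <oo) (cabs (c j))%:E)%E].

Definition chiC n (A : set (Rn n)) : Rn n -> R[i] :=
  fun x => ((\1_A x : R)%:C)%C.

End MixedNorms.

From HB Require Import structures.
From mathcomp Require Import all_boot all_order all_algebra.
From mathcomp Require Import all_classical all_reals all_analysis.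
From mathcomp Require Import ess_sup_inf complex.
From mathcomp Require Import ring lra zify measurable_realfun.

Set Implicit Arguments.
Unset Strict Implicit.
Unset Printing Implicit Defensive.
Import Order.TTheory GRing.Theory Num.Theory.
Import numFieldNormedType.Exports.
Local Open Scope classical_set_scope.
Local Open Scope ring_scope.

(* The mixed norms are iterated one-dimensional norms, and the iterated norm of
   [K * \1_(I_1 x ... x I_n)] is [K * \prod_i |I_i|^(1/p_i)]; every estimate below
   comes from comparing with such boxes, from above or from below.

   Fix a radius r.  The ball B(y,r) has volume at least (2r/(n+1))^n,
   and chi_B(x0,r0) chi_B(y,r) lives in a cube of half-side min(r,r0) and vanishes
   unless y lies in the cube of half-side r+r0 around x0.  So the integrand in y is
   at most (2r/(n+1))^(ne) (2 min(r,r0))^(sum 1/p_i) (2(r+r0))^(sum 1/s_i), where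
   e = 1/alpha - (1/n) sum 1/p_i - (1/n) sum 1/s_i <= 0; the constraints
   (1/n) sum 1/s_i <= 1/alpha <= (1/n) sum 1/p_i turn this into C r0^(n/alpha),
   separately for r <= r0 and for r >= r0.

   H part.  chi_B(x0,r0) = r0^(n/alpha') 3^n St_r0 (3^-n chi_B(x0/r0,1)) is a one-term
   admissible decomposition: a unit ball meets at most three unit intervals in each
   coordinate, so the amalgam norm of 3^-n chi_B(z,1) is at most 1. *)

Lemma indic_ge0 {R : numDomainType} {T : Type} (A : set T) x : 0 <= \1_A x :> R.
Proof. by rewrite indicE. Qed.

Lemma indic_le1 {R : numDomainType} {T : Type} (A : set T) x : \1_A x <= 1 :> R.
Proof. by rewrite indicE; case: (_ \in _). Qed.

Lemma le_indic {R : numDomainType} {T : Type} (A B : set T) x :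
  (A x -> B x) -> \1_A x <= \1_B x :> R.
Proof.
move=> AB; rewrite !indicE; case: (boolP (x \in A)) => // /set_mem/AB Bx.
by rewrite mem_set.
Qed.

Lemma indic_eq {R : numDomainType} {T U : Type} (A : set T) (B : set U) x y :
  (A x <-> B y) -> \1_A x = \1_B y :> R.
Proof.
move=> AB; rewrite !indicE; have [Ax|nAx] := pselect (A x).
  by rewrite !mem_set //; apply/AB.
by rewrite !memNset // => /AB.
Qed.

Lemma indic_set3_le {R : numDomainType} {T : Type} (a1 a2 a3 : T) x :
  \1_[set a1; a2; a3] x <= \1_[set a1] x + \1_[set a2] x + \1_[set a3] x :> R.
Proof.
rewrite [leLHS]indicE; case: (boolP (x \in _)) => [/set_mem|_]; last first.
  by rewrite !addr_ge0 ?indic_ge0.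
have one a : \1_[set a] a = 1 :> R by rewrite indicE mem_set.
case=> [[|]|] ->; rewrite one.
- by rewrite -addrA lerDl addr_ge0 ?indic_ge0.
- by rewrite addrAC lerDr addr_ge0 ?indic_ge0.
- by rewrite lerDr addr_ge0 ?indic_ge0.
Qed.

Lemma prodr_ord_ltS (R : comPzRingType) n (F : 'I_n -> R) (k : 'I_n) :
  \prod_(i < n | (i < k.+1)%N) F i = F k * \prod_(i < n | (i < k)%N) F i.
Proof.
rewrite (bigD1 k) //=; congr (_ * _); apply: eq_bigl => i.
by rewrite ltnS andbC -ltn_neqAle.
Qed.

Section IteratedNorm.
Variables (R : realType) (n : nat) (T : Type).
Variable agg : \bar R -> (T -> \bar R) -> \bar R.
Variable p : 'I_n -> \bar R.
(* [rel] is instantiated with [<=] and with [>=]: one induction gives both the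
   upper and the lower box estimates. *)
Variable rel : \bar R -> \bar R -> Prop.
Variables (I : 'I_n -> set T) (M : 'I_n -> R).
Local Open Scope ereal_scope.

Hypothesis agg_ge0 : forall q f, (forall t, 0 <= f t) -> 0 <= agg q f.

Lemma iter_norm_ge0 g : (forall x, 0 <= g x) -> forall k x, 0 <= iter_norm agg p g k x.
Proof. by move=> g0; elim=> [|k IH] x //=; exact: agg_ge0. Qed.

(* After [k] steps of [iter_norm] only the coordinates [k, k + 1, ...] are free. *)
Definition tail_box (k : nat) : set ('I_n -> T) :=
  [set x | forall i : 'I_n, (k <= i)%N -> I i (x i)].

Lemma tail_box0 : tail_box 0 = [set x | forall i, I i (x i)].
Proof. by apply/seteqP; split=> x xI i *; exact: xI. Qed.

Lemma tail_boxT x : tail_box n x.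
Proof. by move=> i; rewrite leqNgt ltn_ord. Qed.

Lemma indic_tail_box_upd (k : 'I_n) x t :
  \1_(tail_box k) (upd x k t) = (\1_(tail_box k.+1) x * \1_(I k) t)%R :> R.
Proof.
have -> : \1_(I k) t = \1_[set _ : 'I_n -> T | I k t] x :> R by apply: indic_eq.
rewrite -[RHS]/((\1_ _ \* \1_ _)%R x) -indicI; apply: indic_eq; split=> [xI|[xI It] i ki].
  split; last by have := xI k (leqnn k); rewrite /upd eqxx.
  move=> i ki; have := xI i (ltnW ki); rewrite /upd.
  by case: eqP => // ik; move: ki; rewrite ik ltnn.
rewrite /upd; case: eqP => [/val_inj-> //|ik]; apply: xI.
by rewrite ltn_neqAle ki andbT; apply/eqP => /esym.
Qed.

Hypothesis rel_trans : forall x y z, rel x y -> rel y z -> rel x z.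
Hypothesis agg_rel : forall i f h, (forall t, 0 <= f t) -> (forall t, 0 <= h t) ->
  (forall t, rel (f t) (h t)) -> rel (agg (p i) f) (agg (p i) h).
Hypothesis agg_indic : forall i (c : R), (0 <= c)%R ->
  rel (agg (p i) (fun t => (c * \1_(I i) t)%:E)) (c * M i)%:E.
Hypothesis M_ge0 : forall i, (0 <= M i)%R.

Lemma iter_norm_tail_box g (K : R) : (0 <= K)%R -> (forall x, 0 <= g x) ->
  (forall x, rel (g x) (K * \1_[set x | forall i, I i (x i)] x)%:E) ->
  forall k, (k <= n)%N -> forall x, rel (iter_norm agg p g k x)
    (K * \prod_(i < n | (i < k)%N) M i * \1_(tail_box k) x)%:E.
Proof.
move=> K0 g0 gK; elim=> [_ x|k IH kn x /=].
  by rewrite big_pred0 // mulr1 tail_box0.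
pose o := Ordinal kn.
have -> : exp_at p k = p o by rewrite /exp_at -[k]/(val o) valK.
pose c := (K * \prod_(i < n | (i < k)%N) M i * \1_(tail_box k.+1) x)%R.
have c0 : (0 <= c)%R by rewrite !mulr_ge0 // prodr_ge0.
have -> : (K * \prod_(i < n | (i < k.+1)%N) M i * \1_(tail_box k.+1) x)%:E = (c * M o)%:E.
  by rewrite (prodr_ord_ltS M o) /c; congr (_%:E); ring.
apply: rel_trans _ (agg_indic o c0).
apply: agg_rel => [t|t|t]; first exact: iter_norm_ge0.
  by rewrite lee_fin mulr_ge0.
by rewrite /c -mulrA -(indic_tail_box_upd o); exact: IH (ltnW kn) _.
Qed.

Lemma iter_norm_box g (K : R) : (0 <= K)%R -> (forall x, 0 <= g x) ->
  (forall x, rel (g x) (K * \1_[set x | forall i, I i (x i)] x)%:E) ->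
  forall x, rel (iter_norm agg p g n x) (K * \prod_(i < n) M i)%:E.
Proof.
move=> K0 g0 gK x; have := iter_norm_tail_box K0 g0 gK (leqnn n) x.
rewrite indicE mem_set; last exact: tail_boxT.
by rewrite mulr1 (eq_bigl xpredT) // => i; rewrite ltn_ord.
Qed.

End IteratedNorm.

Section OneDimensionalNorms.
Variable R : realType.
Local Notation mu := (@lebesgue_measure R).
Local Open Scope ereal_scope.

(* No measurability needed: a nonnegative integral is a supremum over simple
   minorants. *)
Lemma le_integral_ge0 (f g : R -> \bar R) : (forall t, 0 <= f t) ->
  (forall t, f t <= g t) -> \int[mu]_(t in setT) f t <= \int[mu]_(t in setT) g t.
Proof.
move=> f0 fg; have g0 t : 0 <= g t by apply: le_trans (fg t).
rewrite !ge0_integralTE //; apply: ereal_sup_le => _ [h hf <-].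
by exists h => //= x; exact: le_trans (hf x) (fg x).
Qed.

Lemma Lp1_ge0 q (f : R -> \bar R) : (forall t, 0 <= f t) -> 0 <= Lp1 q f.
Proof.
case: q => [r| |] f0 /=; try exact: poweR_ge0.
have muT : 0 < mu [set: R] by rewrite -set_itvNyy lebesgue_measure_itv /= ltry.
by apply: ess_sup_gee muT _; exact: aeW.
Qed.

Lemma le_Lp1 p (f g : R -> \bar R) : 1 <= p -> (forall t, 0 <= f t) ->
  (forall t, f t <= g t) -> Lp1 p f <= Lp1 p g.
Proof.
case: p => [r| |] //= r1 f0 fg; last exact/le_ess_sup/aeW.
have r0 : (0 <= r)%R by rewrite (le_trans _ (_ : 1 <= r)%R) // -lee_fin.
have int_ge0 h : (forall t, 0 <= h t) -> 0 <= \int[mu]_(t in setT) h t `^ r.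
  by move=> h0; apply: integral_ge0 => t _; exact: poweR_ge0.
apply: gt0_ler_poweR; first by rewrite invr_ge0.
- by rewrite in_itv /= leey andbT int_ge0.
- by rewrite in_itv /= leey andbT int_ge0 // => t; apply: le_trans (fg t).
apply: le_integral_ge0 => t; first exact: poweR_ge0.
by apply: gt0_ler_poweR; rewrite // in_itv /= leey andbT // (le_trans (f0 t)).
Qed.

Lemma Lp1_indic (r c L : R) (I : set R) : (1 <= r)%R -> (0 <= c)%R ->
  measurable I -> mu I = L%:E ->
  Lp1 r%:E (fun t => (c * \1_I t)%:E) = (c * L `^ r^-1)%:E.
Proof.
move=> r1 c0 mI muI /=.
have r0 : (0 < r)%R by apply: lt_le_trans r1.
have L0 : (0 <= L)%R by rewrite -lee_fin -muI measure_ge0.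
have -> : (fun t => ((c * \1_I t) `^ r)%:E) = (fun t => (c `^ r)%:E * (\1_I t)%:E).
  apply/funext => t; rewrite -EFinM indicE.
  by case: (t \in I); rewrite ?mulr1 ?mulr0 ?powR0 ?gt_eqF.
rewrite ge0_integralZl_EFin ?powR_ge0 //; last exact/measurable_EFinP/measurable_indic.
have -> : \int[mu]_t (\1_I t)%:E = L%:E by rewrite integral_indic // setIT; exact: muI.
rewrite -EFinM poweR_EFin powRM ?powR_ge0 //.
by rewrite -powRrM mulfV ?gt_eqF // powRr1.
Qed.

Lemma Lp1_indic_le (p : \bar R) (c L : R) (I : set R) : 1 <= p -> (0 <= c)%R ->
  measurable I -> mu I = L%:E ->
  Lp1 p (fun t => (c * \1_I t)%:E) <= (c * L `^ inv_exp p)%:E.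
Proof.
case: p => [r| |] // p1 c0 mI muI.
  by rewrite (Lp1_indic _ _ mI muI) // -lee_fin.
rewrite /= powRr0 mulr1; apply/ess_supP/aeW => t.
by rewrite lee_fin indicE; case: (t \in I); rewrite ?mulr1 ?mulr0.
Qed.

Lemma lp1_ge0 q (f : int -> \bar R) : (forall k, 0 <= f k) -> 0 <= lp1 q f.
Proof.
case: q => [r| |] f0 /=; try exact: poweR_ge0.
by apply: le_trans (f0 0%R) _; apply: ereal_sup_ubound; exists 0%R.
Qed.

Lemma le_lp1 p (f g : int -> \bar R) : 1 <= p -> (forall k, 0 <= f k) ->
  (forall k, f k <= g k) -> lp1 p f <= lp1 p g.
Proof.
case: p => [r| |] //= r1 f0 fg.
  have r0 : (0 <= r)%R by rewrite (le_trans _ (_ : 1 <= r)%R) // -lee_fin.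
  have sum_ge0 h : (forall k, 0 <= h k) -> 0 <= \esum_(k in [set: int]) h k `^ r.
    by move=> h0; apply: esum_ge0 => k _; exact: poweR_ge0.
  apply: gt0_ler_poweR; first by rewrite invr_ge0.
  - by rewrite in_itv /= leey andbT sum_ge0.
  - by rewrite in_itv /= leey andbT sum_ge0 // => k; apply: le_trans (fg k).
  apply: le_esum => k _.
  by apply: gt0_ler_poweR; rewrite // in_itv /= leey andbT // (le_trans (f0 k)).
apply: ge_ereal_sup => _ [k _ <-]; apply: le_trans (fg k) _.
by apply: ereal_sup_ubound; exists k.
Qed.

Lemma esum_indic1 (d : R) (a : int) : (0 <= d)%R ->
  \esum_(k in [set: int]) (d * \1_[set a] k)%:E = d%:E.
Proof.
move=> d0; rewrite (eq_esum (b := fun k => if k \in [set a] then d%:E else 0)).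
  by rewrite -esum_mkcond esum_set1.
by move=> k _; rewrite indicE; case: (k \in _); rewrite ?mulr1 ?mulr0.
Qed.

Lemma lp1_indic3_le (q : \bar R) (c : R) (a1 a2 a3 : int) : 1 <= q -> (0 <= c)%R ->
  lp1 q (fun k => (c * \1_[set a1; a2; a3] k)%:E) <= (c * 3)%:E.
Proof.
move=> q1 c0; set J := [set a1; a2; a3].
case: q q1 => [r| |] // q1 /=; last first.
  apply: ge_ereal_sup => _ [k _ <-]; rewrite lee_fin ler_wpM2l //.
  by rewrite (le_trans (indic_le1 _ _)) // (ler_nat _ 1 3).
have r0 : (0 < r)%R by rewrite (lt_le_trans _ (_ : 1 <= r)%R) // -lee_fin.
set d := (c `^ r)%R; have d0 : (0 <= d)%R by rewrite powR_ge0.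
have dindic_ge0 (a k : int) : 0 <= (d * \1_[set a] k)%:E.
  by rewrite lee_fin mulr_ge0 ?indic_ge0.
apply: (@le_trans _ _ ((3 * d)%:E `^ r^-1)).
  apply: gt0_ler_poweR; first by rewrite invr_ge0 ltW.
  - by rewrite in_itv /= leey andbT esum_ge0 // => k _; rewrite lee_fin powR_ge0.
  - by rewrite in_itv /= leey andbT lee_fin mulr_ge0.
  apply: (@le_trans _ _ (\esum_(k in [set: int]) ((d * \1_[set a1] k)%:E +
      (d * \1_[set a2] k)%:E + (d * \1_[set a3] k)%:E))).
    apply: le_esum => k _; rewrite -!EFinD lee_fin powRM ?indic_ge0 // -!mulrDr.
    rewrite ler_wpM2l //; have := @indic_set3_le R _ a1 a2 a3 k.
    by rewrite indicE; case: (k \in J) => /=; rewrite ?powR1 ?powR0 ?gt_eqF.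
  rewrite !esumD ?esum_indic1 //; last by move=> k _; rewrite adde_ge0.
  by rewrite -!EFinD lee_fin; lra.
rewrite poweR_EFin lee_fin powRM ?(ler0n _ 3) // -powRrM mulfV ?gt_eqF // powRr1 //.
rewrite mulrC ler_wpM2l //; apply: ler1_powR; rewrite ?(ler_nat _ 1 3) //.
by rewrite invr_le1 ?unitfE ?gt_eqF // -lee_fin.
Qed.
End OneDimensionalNorms.

Section MixedNormBounds.
Variables (R : realType) (n : nat).
Local Notation mu := (@lebesgue_measure R).
Local Open Scope ereal_scope.

Lemma mixedL_ge0 (p : 'I_n -> \bar R) g : (forall x, 0 <= g x) -> 0 <= mixedL p g.
Proof. by move=> g0; apply: iter_norm_ge0 => // q f; exact: Lp1_ge0. Qed.

Lemma mixedl_ge0 (s : 'I_n -> \bar R) a : (forall k, 0 <= a k) -> 0 <= mixedl s a.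
Proof. by move=> a0; apply: iter_norm_ge0 => // q f; exact: lp1_ge0. Qed.

Lemma mixedL_box_le (p : 'I_n -> \bar R) (g : Rn R n -> \bar R)
    (I : 'I_n -> set R) (L : 'I_n -> R) (K : R) :
  (forall i, 1 <= p i) -> (forall i, measurable (I i)) ->
  (forall i, mu (I i) = (L i)%:E) -> (0 <= K)%R -> (forall x, 0 <= g x) ->
  (forall x, g x <= (K * \1_[set x | forall i, I i (x i)] x)%:E) ->
  mixedL p g <= (K * \prod_(i < n) L i `^ inv_exp (p i))%:E.
Proof.
move=> p1 mI muI K0 g0 gK.
apply: (iter_norm_box (rel := fun x y => x <= y) (I := I) (@Lp1_ge0 R)) => //.
- by move=> x y z; exact: le_trans.
- by move=> i f h f0 _; exact: le_Lp1.
- by move=> i c c0; exact: Lp1_indic_le.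
- by move=> i; exact: powR_ge0.
Qed.

Lemma mixedl_box3_le (s : 'I_n -> \bar R) (a : Zn n -> \bar R)
    (a1 a2 a3 : 'I_n -> int) (K : R) :
  (forall i, 1 <= s i) -> (0 <= K)%R -> (forall k, 0 <= a k) ->
  (forall k, a k <= (K * \1_[set k | forall i, [set a1 i; a2 i; a3 i] (k i)] k)%:E) ->
  mixedl s a <= (K * 3 ^+ n)%:E.
Proof.
move=> s1 K0 a0 aK; rewrite -[in X in X%:E](card_ord n) -prodr_const.
apply: (iter_norm_box (rel := fun x y => x <= y)
  (I := fun i => [set a1 i; a2 i; a3 i]) (@lp1_ge0 R)) => //.
- by move=> x y z; exact: le_trans.
- by move=> i f h f0 _; exact: le_lp1.
- by move=> i c c0; exact: lp1_indic3_le.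
Qed.

Lemma vol_ge_box (A : set (Rn R n)) (I : 'I_n -> set R) (L : 'I_n -> R) :
  (forall i, measurable (I i)) -> (forall i, mu (I i) = (L i)%:E) ->
  [set x | forall i, I i (x i)] `<=` A -> (\prod_(i < n) L i)%:E <= vol A.
Proof.
move=> mI muI IA; have L0 i : (0 <= L i)%R by rewrite -lee_fin -muI measure_ge0.
rewrite -[X in X%:E]mul1r.
apply: (iter_norm_box (rel := fun x y => y <= x) (I := I) (@Lp1_ge0 R)) => //.
- by move=> x y z yx zy; exact: le_trans zy yx.
- by move=> i f h _ h0; exact: le_Lp1.
- move=> i c c0; rewrite -[X in _ <= X]/(Lp1 1%:E _).
  by rewrite (Lp1_indic _ _ (mI i) (muI i)) // invr1 powRr1.
- by move=> x; rewrite lee_fin mul1r; apply: le_indic => /IA.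
Qed.

Lemma mixedL_eq0 (p : 'I_n -> \bar R) g :
  (forall i, 1 <= p i) -> (forall x, g x = 0) -> mixedL p g = 0.
Proof.
move=> p1 g0; apply/eqP; rewrite eq_le mixedL_ge0 ?andbT => [|x]; last by rewrite g0.
have := mixedL_box_le (I := fun=> `]0%R, 1%R[%classic) (L := fun=> 1%R) (K := 0%R) p1.
rewrite mul0r; apply=> // [i|x|x]; rewrite ?g0 ?mul0r //.
by rewrite lebesgue_measure_itv /= lte01 oppr0 adde0.
Qed.

End MixedNormBounds.

Section BallGeometry.
Variables (R : realType) (n : nat).
Local Notation mu := (@lebesgue_measure R).

Definition cube_around (y : Rn R n) (h : R) : set (Rn R n) :=
  [set x | forall i, ball (y i) h (x i)].

Lemma eball_sub_cube (y : Rn R n) r : 0 <= r -> eball y r `<=` cube_around y r.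
Proof.
move=> r0 x xB i; rewrite ball_itv /= in_itv /=.
have : (x i - y i) ^+ 2 < r ^+ 2.
  apply: le_lt_trans xB; rewrite (bigD1 i) //= lerDl.
  by apply: sumr_ge0 => j _; rewrite sqr_ge0.
by move=> xy; apply/andP; split; nra.
Qed.

Lemma cube_sub_eball (y : Rn R n) r : 0 < r ->
  cube_around y (r / n.+1%:R) `<=` eball y r.
Proof.
move=> r0 x xC; rewrite /eball /=; set h := r / n.+1%:R in xC *.
have hn : h * n.+1%:R = r by rewrite /h mulfVK.
have h0 : 0 < h by rewrite /h divr_gt0.
apply: (@le_lt_trans _ _ (\sum_(i < n) h ^+ 2)).
  apply: ler_sum => i _; have := xC i; rewrite ball_itv /= in_itv /= => /andP[xl xr].
  have e1 : 0 < h - (x i - y i) by lra.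
  have e2 : 0 < h + (x i - y i) by lra.
  have := mulr_gt0 e1 e2; nra.
rewrite sumr_const card_ord -mulr_natr -hn -natr1.
have : 0 <= n%:R :> R by [].
nra.
Qed.

Lemma lebesgue_measure_ballE (c h : R) : 0 <= h -> mu (ball c h) = (2 * h)%:E.
Proof. by move=> h0; rewrite lebesgue_measure_ball // mulr_natl. Qed.

Lemma vol_eball_le (y : Rn R n) r : 0 < r -> (vol (eball y r) <= ((2 * r) ^+ n)%:E)%E.
Proof.
move=> r0; have -> : (2 * r) ^+ n = 1 * \prod_(i < n) (2 * r) `^ inv_exp (1%E : \bar R).
  by rewrite prodr_const card_ord /= invr1 powRr1 ?mul1r // mulr_ge0 // ltW.
apply: (mixedL_box_le (I := fun i => ball (y i) r)) => // [i|i|x].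
- exact: measurable_ball.
- by rewrite lebesgue_measure_ballE // ltW.
- by rewrite lee_fin mul1r; apply: le_indic; exact: eball_sub_cube (ltW r0) x.
Qed.

Lemma vol_eball_ge (y : Rn R n) r : 0 < r ->
  (((2 * (r / n.+1%:R)) ^+ n)%:E <= vol (eball y r))%E.
Proof.
move=> r0; have -> : (2 * (r / n.+1%:R)) ^+ n = \prod_(i < n) (2 * (r / n.+1%:R)).
  by rewrite prodr_const card_ord.
apply: (vol_ge_box (I := fun i => ball (y i) (r / n.+1%:R))) => [i|i|].
- exact: measurable_ball.
- by rewrite lebesgue_measure_ballE // divr_ge0 // ltW.
- exact: cube_sub_eball.
Qed.

End BallGeometry.

Section PowerInequalities.
Variable R : realType.

Lemma gt0_powRD (x a b : R) : 0 < x -> x `^ (a + b) = x `^ a * x `^ b.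
Proof. by move=> x0; rewrite powRD //; apply/implyP => _; rewrite gt_eqF. Qed.

Lemma le0_ger_powR (u x y : R) : u <= 0 -> 0 < x -> x <= y -> y `^ u <= x `^ u.
Proof.
move=> u0 x0 xy; have y0 := lt_le_trans x0 xy.
have [v -> v0] : exists2 v, u = - v & 0 <= v by exists (- u); rewrite ?opprK // oppr_ge0.
rewrite !powRN lef_pV2 ?posrE ?powR_gt0 //.
by apply: ge0_ler_powR; rewrite // nnegrE ltW.
Qed.

Lemma prodr_powR n (x : R) (f : 'I_n -> R) : 0 < x ->
  \prod_(i < n) x `^ f i = x `^ (\sum_(i < n) f i).
Proof.
move=> x0; elim/big_ind2: _ => [|a u b v -> ->|]; rewrite ?powRr0 //.
by rewrite gt0_powRD.
Qed.

Lemma powR_minr_addr_le (r r0 u v w : R) : 0 < r -> 0 < r0 ->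
  0 <= v -> 0 <= w -> 0 <= u + v -> u + w <= 0 ->
  r `^ u * Num.min r r0 `^ v * (r + r0) `^ w <= 2 `^ w * r0 `^ (u + v + w).
Proof.
move=> r_gt0 r0_gt0 v0 w0 uv uw.
have [rr0|r0r] := leP r r0.
- have h1 : r `^ u * r `^ v <= r0 `^ (u + v).
    by rewrite -gt0_powRD // ge0_ler_powR // nnegrE ltW.
  have h2 : (r + r0) `^ w <= 2 `^ w * r0 `^ w.
    by rewrite -powRM ?ge0_ler_powR ?nnegrE //; lra.
  rewrite gt0_powRD // mulrCA.
  by apply: ler_pM; rewrite ?mulr_ge0 ?powR_ge0.
- have h1 : r `^ u * (r + r0) `^ w <= 2 `^ w * r0 `^ (u + w).
    apply: (@le_trans _ _ (r `^ u * (2 * r) `^ w)).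
      by rewrite ler_wpM2l ?powR_ge0 // ge0_ler_powR ?nnegrE //; lra.
    rewrite powRM ?(ltW r_gt0) // mulrCA -gt0_powRD // ler_wpM2l ?powR_ge0 //.
    exact: le0_ger_powR (ltW r0r).
  rewrite -addrA [v + w]addrC addrA gt0_powRD // mulrA.
  by rewrite mulrAC ler_wpM2r ?powR_ge0.
Qed.

End PowerInequalities.

Lemma cabs_real (R : realType) (k : R) : 0 <= k -> cabs k%:C%C = k.
Proof. by move=> k0; rewrite /cabs /Normc.normc /= expr0n addr0 sqrtr_sqr ger0_norm. Qed.

Lemma cabs_ge0 (R : realType) (z : R[i]) : 0 <= cabs z.
Proof. by case: z => a b; rewrite /cabs /= sqrtr_ge0. Qed.

Lemma cabs_chiC (R : realType) n (A : set (Rn R n)) x : cabs (chiC A x) = \1_A x.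
Proof. exact/cabs_real/indic_ge0. Qed.

Section MorreyBound.
Variables (R : realType) (n : nat).
Local Open Scope ereal_scope.

Lemma eballI_sub_eball (x0 y : Rn R n) r0 r :
  eball x0 r0 `&` eball y r `<=` eball (if r <= r0 then y else x0)%R (Num.min r r0).
Proof. by move=> x [x0B yB]; case: leP. Qed.

Lemma eballI_cube_center (x0 y x : Rn R n) r0 r : (0 <= r0)%R -> (0 <= r)%R ->
  eball x0 r0 x -> eball y r x -> cube_around x0 (r + r0) y.
Proof.
move=> r00 r_ge0 x0B yB i; have := eball_sub_cube r00 x0B i.
have := eball_sub_cube r_ge0 yB i; rewrite !ball_itv /= !in_itv /=.
by move=> /andP[? ?] /andP[? ?]; apply/andP; split; lra.
Qed.

Lemma normL_on_chi_eball_le (p : 'I_n -> \bar R) (x0 y : Rn R n) r0 r :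
  (forall i, 1 <= p i) -> (0 < r0)%R -> (0 < r)%R ->
  normL_on p (chiC (eball x0 r0)) (eball y r) <=
  ((2 * Num.min r r0) `^ (\sum_(i < n) inv_exp (p i)) *
     \1_(cube_around x0 (r + r0)) y)%:E.
Proof.
move=> p1 r00 r_gt0; set h := Num.min r r0; set c := if (r <= r0)%R then y else x0.
have h0 : (0 < h)%R by rewrite lt_min r_gt0.
rewrite -prodr_powR ?mulr_gt0 // mulrC.
apply: (mixedL_box_le (I := fun i => ball (c i) h)) => // [i|i|x|x].
- exact: measurable_ball.
- by rewrite lebesgue_measure_ballE // ltW.
- by rewrite cabs_chiC lee_fin mulr_ge0 ?indic_ge0.
rewrite cabs_chiC lee_fin; have [[x0B yB]|] := pselect (eball x0 r0 x /\ eball y r x).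
  rewrite [X in (_ <= _ * X)%R]indicE mem_set; last first.
    by apply: (eball_sub_cube (ltW h0)); exact: eballI_sub_eball.
  rewrite [X in (_ <= X * _)%R]indicE mem_set; last first.
    exact: eballI_cube_center (ltW r00) (ltW r_gt0) x0B yB.
  by apply: ler_pM; rewrite ?indic_ge0 ?indic_le1.
move=> nB; rewrite -[leLHS]/((\1_ _ \* \1_ _)%R x) -indicI indicE memNset //.
by rewrite mulr_ge0 ?indic_ge0.
Qed.

Lemma poweR_vol_eball_le (y : Rn R n) r e : (0 < r)%R -> (e <= 0)%R ->
  vol (eball y r) `^ e <= (((2 * (r / n.+1%:R)) ^+ n) `^ e)%:E.
Proof.
move=> r0 e0; have := vol_eball_ge y r0; have := vol_eball_le y r0.
case: (vol (eball y r)) => [v| |] //.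
move=> _; rewrite poweR_EFin !lee_fin => Vv; apply: le0_ger_powR Vv => //.
by rewrite exprn_gt0 // mulr_gt0 // divr_gt0.
Qed.

Lemma mixedL_morrey_integrand_le (p s : 'I_n -> \bar R) (x0 : Rn R n) r0 r e :
  (forall i, 1 <= p i) -> (forall i, 1 <= s i) -> (0 < r0)%R -> (0 < r)%R ->
  (e <= 0)%R ->
  mixedL s (fun y =>
    vol (eball y r) `^ e * normL_on p (chiC (eball x0 r0)) (eball y r)) <=
  (((2 * (r / n.+1%:R)) ^+ n) `^ e *
     (2 * Num.min r r0) `^ (\sum_(i < n) inv_exp (p i)) *
     (2 * (r + r0)) `^ (\sum_(i < n) inv_exp (s i)))%:E.
Proof.
move=> p1 s1 r00 r_gt0 e0; have rr0 : (0 < r + r0)%R by rewrite addr_gt0.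
have normL_ge0 y : 0 <= normL_on p (chiC (eball x0 r0)) (eball y r).
  by apply: mixedL_ge0 => x; rewrite lee_fin cabs_chiC mulr_ge0 ?indic_ge0.
rewrite -(@prodr_powR _ _ (2 * (r + r0)) (fun i => inv_exp (s i))) ?mulr_gt0 //.
apply: (mixedL_box_le (I := fun i => ball (x0 i) (r + r0))) => // [i|i||y|y].
- exact: measurable_ball.
- by rewrite lebesgue_measure_ballE // ltW.
- by rewrite mulr_ge0 ?powR_ge0.
- by rewrite mule_ge0 ?poweR_ge0.
rewrite -mulrA EFinM lee_pmul ?poweR_ge0 //; first exact: poweR_vol_eball_le.
exact: normL_on_chi_eball_le.
Qed.

End MorreyBound.

Lemma inv_exp_ge0 (R : realType) (q : \bar R) : (1 <= q)%E -> 0 <= inv_exp q.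
Proof. by case: q => [r| |] //= r1; rewrite invr_ge0 (le_trans ler01) // -lee_fin. Qed.

Lemma morrey_kernel_scaling_le (R : realType) n (P S c e r r0 : R) : (0 < n)%N ->
  0 <= P -> 0 <= S -> S <= n%:R * c -> n%:R * c <= P ->
  n%:R * e = n%:R * c - P - S -> 0 < r -> 0 < r0 ->
  ((2 * (r / n.+1%:R)) ^+ n) `^ e * (2 * Num.min r r0) `^ P * (2 * (r + r0)) `^ S <=
  (2 / n.+1%:R) `^ (n%:R * e) * 2 `^ P * 4 `^ S * r0 `^ (n%:R * c).
Proof.
move=> n_gt0 P0 S0 SNc NcP eE r_gt0 r0_gt0.
have [r_ge0 r0_ge0] := (ltW r_gt0, ltW r0_gt0).
set N : R := n%:R in SNc NcP eE *; set l : R := 2 / n.+1%:R; set u := N * e in eE *.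
have l_gt0 : 0 < l by rewrite divr_gt0.
have -> : ((2 * (r / n.+1%:R)) ^+ n) `^ e = l `^ u * r `^ u.
  have -> : 2 * (r / n.+1%:R) = l * r by rewrite /l mulrCA mulrC.
  by rewrite -powR_mulrn ?mulr_ge0 ?ltW // -powRrM powRM ?ltW.
have -> : 4 `^ S = 2 `^ S * 2 `^ S :> R by rewrite -powRM // (_ : 2 * 2 = 4 :> R) //; lra.
rewrite [(2 * _) `^ P]powRM ?[(2 * _) `^ S]powRM ?le_min ?r_ge0 ?addr_ge0 //.
have -> : N * c = u + P + S by rewrite eE; ring.
have uP : 0 <= u + P by rewrite eE; lra.
have uS : u + S <= 0 by rewrite eE; lra.
set K := l `^ u * 2 `^ P * 2 `^ S; have K_gt0 : 0 < K by rewrite !mulr_gt0 ?powR_gt0.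
rewrite [leLHS](_ : _ = K * (r `^ u * Num.min r r0 `^ P * (r + r0) `^ S)); last first.
  by rewrite /K; ring.
rewrite [leRHS](_ : _ = K * (2 `^ S * r0 `^ (u + P + S))); last by rewrite /K; ring.
by rewrite ler_pM2l // powR_minr_addr_le.
Qed.

Lemma morrey_norm_chi_eball_le (R : realType) n (p s : 'I_n -> \bar R) (alpha : \bar R) :
  (0 < n)%N -> (forall i, (1 <= p i)%E) -> (forall i, (1 <= s i)%E) ->
  (\sum_(i < n) inv_exp (s i)) / n%:R <= inv_exp alpha ->
  inv_exp alpha <= (\sum_(i < n) inv_exp (p i)) / n%:R ->
  exists2 C : R, 0 < C & forall (x0 : Rn R n) r0, 0 < r0 ->
    (morrey_norm p s alpha (chiC (eball x0 r0)) <=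
       (C * r0 `^ (n%:R * inv_exp alpha))%:E)%E.
Proof.
move=> n_gt0 p1 s1 Sa aP; set N : R := n%:R; have N_gt0 : 0 < N by rewrite ltr0n.
set P := \sum_(i < n) inv_exp (p i) in aP *; set S := \sum_(i < n) inv_exp (s i) in Sa *.
set c := inv_exp alpha in Sa aP *; set e := c - P / N - S / N.
have P0 : 0 <= P by apply: sumr_ge0 => i _; exact: inv_exp_ge0.
have S0 : 0 <= S by apply: sumr_ge0 => i _; exact: inv_exp_ge0.
have SNc : S <= N * c by rewrite mulrC -ler_pdivrMr.
have NcP : N * c <= P by rewrite mulrC -ler_pdivlMr.
have eE : N * e = N * c - P - S by rewrite /e; field; rewrite gt_eqF.
have e0 : e <= 0 by rewrite -(pmulr_rle0 _ N_gt0) eE; lra.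
exists ((2 / n.+1%:R) `^ (N * e) * 2 `^ P * 4 `^ S).
  by rewrite !mulr_gt0 ?powR_gt0 ?divr_gt0.
move=> x0 r0 r0_gt0; apply: ge_ereal_sup => _ [r /= r_gt0 <-].
rewrite -/N -/P -/S -/c -/e.
apply: le_trans (mixedL_morrey_integrand_le x0 p1 s1 r0_gt0 r_gt0 e0) _.
by rewrite lee_fin morrey_kernel_scaling_le.
Qed.

Section BorelRn.
Variables (R : realType) (n : nat).
Local Notation Borel := (g_sigma_algebraType (@boxes R n)).

Lemma measurable_coord (i : 'I_n) :
  measurable_fun [set: Borel] (fun x : Borel => (x : Rn R n) i).
Proof.
apply: (@measurability _ _ Borel R setT _ (@RGenOpens.G R)).
  exact: RGenOpens.measurableE.
move=> _ [_ [a [b ->]] <-]; rewrite setTI.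
have -> : (fun x : Borel => (x : Rn R n) i) @^-1` `]a, b[%classic =
    \bigcup_(m in [set: nat]) [set x : Rn R n | forall j : 'I_n,
      (if j == i then a else - m%:R) < x j < (if j == i then b else m%:R)].
  apply/seteqP; split => x /=; last by move=> [m _ /(_ i)]; rewrite eqxx in_itv.
  rewrite in_itv /= => /andP[ax xb].
  have s0 : 0 <= \sum_(j < n) `|x j| by apply: sumr_ge0.
  exists (Num.bound (\sum_(j < n) `|x j|)) => // j.
  case: eqP => [->|_]; first by rewrite ax xb.
  rewrite -ltr_norml (le_lt_trans _ (archi_boundP s0)) //.
  by rewrite (bigD1 j) //= lerDl sumr_ge0.
apply: bigcupT_measurable => m; apply: sub_sigma_algebra.
by exists (fun j => if j == i then a else - m%:R), (fun j => if j == i then b else m%:R).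
Qed.

Lemma borel_eball (y : Rn R n) (r : R) : borel_Rn (eball y r).
Proof.
have mf : measurable_fun [set: Borel]
    (fun x : Borel => \sum_(i < n) ((x : Rn R n) i - y i) ^+ 2).
  apply: measurable_sum => i; apply: measurable_funX.
  by apply: measurable_funB; [exact: measurable_coord | exact: measurable_cst].
have := mf measurableT `]-oo, r ^+ 2[%classic (measurable_itv _).
rewrite setTI; congr borel_Rn; apply/seteqP; split => x /=; by rewrite in_itv.
Qed.

Lemma measurable_Rn_indic (A : set (Rn R n)) (k : R) : borel_Rn A ->
  measurable_Rn (fun x => k * \1_A x).
Proof.
move=> mA B _; rewrite -[_ @^-1` _]/(\1_A @^-1` [set t | B (k * t)]) preimage_indic.
repeat case: ifPn => _.
- exact: (@measurableT _ Borel).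
- exact: mA.
- exact: (@measurableC _ Borel).
- exact: (@measurable0 _ Borel).
Qed.

End BorelRn.

Lemma conj_exp_ge1 (R : realType) (q : \bar R) : (1 <= q)%E -> (1 <= conj_exp q)%E.
Proof.
case: q => [r| |] //= r1; case: eqP => [_|/eqP r_neq1]; first exact: leey.
have r_gt1 : 1 < r by rewrite lt_neqAle eq_sym r_neq1 -lee_fin.
by rewrite lee_fin ler_pdivlMr ?subr_gt0 // mul1r; lra.
Qed.

Lemma int_cube_near_floor (R : realType) (z xi : R) (k : int) :
  k%:~R <= xi < k%:~R + 1 -> z - 1 < xi < z + 1 ->
  [set Num.floor z - 1; Num.floor z; Num.floor z + 1] k.
Proof.
move=> /andP[kx xk] /andP[zx xz].
have k_le : (k - 1 <= Num.floor z)%R by rewrite floor_ge_int rmorphB /=; lra.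
have k_gt : (Num.floor z < k + 2)%R.
  by rewrite -(ltr_int R) rmorphD /=; have := floor_le z; lra.
rewrite /=; lia.
Qed.

Section UnitBump.
Variables (R : realType) (n : nat).

Definition unit_bump (z : Rn R n) : Rn R n -> R[i] :=
  fun x => ((3 ^- n * \1_(eball z 1) x)%:C)%C.

Lemma cabs_unit_bump z x : cabs (unit_bump z x) = 3 ^- n * \1_(eball z 1) x.
Proof. by rewrite cabs_real // mulr_ge0 ?invr_ge0 ?exprn_ge0 ?indic_ge0. Qed.

Lemma L1loc_unit_bump z : L1loc (unit_bump z).
Proof.
split; [exact: measurable_Rn_indic (borel_eball _ _)|..].
  rewrite (_ : (fun x => _) = fun x => 0 * \1_(eball z 1) x).
    exact: measurable_Rn_indic (borel_eball _ _).
  by apply/funext => x; rewrite mul0r.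
move=> rho rho0.
apply: le_lt_trans (ltry (3 ^- n * \prod_(i < n) (2 * rho) `^ inv_exp (1%E : \bar R))).
apply: (mixedL_box_le (I := fun=> ball 0 rho)) => // [i|i|x|x].
- exact: measurable_ball.
- by rewrite lebesgue_measure_ballE // ltW.
- by rewrite cabs_unit_bump lee_fin !mulr_ge0 ?invr_ge0 ?exprn_ge0 ?indic_ge0.
rewrite cabs_unit_bump lee_fin -mulrA ler_wpM2l ?invr_ge0 ?exprn_ge0 //.
rewrite (le_trans (ler_piMl _ (indic_le1 _ _))) ?indic_ge0 //.
by apply: le_indic => /eball_sub_cube; apply; exact: ltW.
Qed.

Lemma normL_on_unit_bump_cube_le (q : 'I_n -> \bar R) z (k : Zn n) :
  (forall i, (1 <= q i)%E) ->
  (normL_on q (unit_bump z) (cube k) <=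
    (3 ^- n * \1_[set k | forall i, [set Num.floor (z i) - 1; Num.floor (z i);
                                        Num.floor (z i) + 1] (k i)] k)%:E)%E.
Proof.
move=> q1; set K := (_ * _)%R.
have K0 : 0 <= K by rewrite mulr_ge0 ?invr_ge0 ?exprn_ge0 ?indic_ge0.
have -> : K = K * \prod_(i < n) 1 `^ inv_exp (q i).
  by rewrite big1 ?mulr1 // => i _; rewrite powR1.
apply: (mixedL_box_le (I := fun i => `[(k i)%:~R, (k i)%:~R + 1[%classic)) => // [i|x|x].
- by rewrite lebesgue_measure_itv /= lte_fin ltrDl ltr01 -EFinD addrAC subrr add0r.
- by rewrite cabs_unit_bump lee_fin !mulr_ge0 ?invr_ge0 ?exprn_ge0 ?indic_ge0.
rewrite cabs_unit_bump lee_fin /K -!mulrA ler_wpM2l ?invr_ge0 ?exprn_ge0 //.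
have [[zB kC]|] := pselect (eball z 1 x /\ cube k x); last first.
  move=> nB; rewrite -[leLHS]/((\1_ _ \* \1_ _)%R x) -indicI indicE memNset //.
  by rewrite mulr_ge0 ?indic_ge0.
rewrite [X in (_ <= X * _)%R]indicE [X in (_ <= _ * X)%R]indicE !mem_set //=.
- by apply: ler_pM; rewrite ?indic_ge0 ?indic_le1.
- move=> i; apply: int_cube_near_floor (kC i) _; have := eball_sub_cube ler01 zB i.
  by rewrite ball_itv /= in_itv.
Qed.

Lemma amalgam_norm_unit_bump_le1 (q t : 'I_n -> \bar R) z :
  (forall i, (1 <= q i)%E) -> (forall i, (1 <= t i)%E) ->
  (amalgam_norm q t (unit_bump z) <= 1)%E.
Proof.
move=> q1 t1; rewrite -(mulVf (_ : 3 ^+ n != 0 :> R)) ?expf_neq0 //.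
apply: mixedl_box3_le => // [k|k].
- apply: mixedL_ge0 => x.
  by rewrite cabs_unit_bump lee_fin !mulr_ge0 ?invr_ge0 ?exprn_ge0 ?indic_ge0.
- exact: normL_on_unit_bump_cube_le.
Qed.

Lemma eball_scale (x0 x : Rn R n) r0 : 0 < r0 ->
  eball (fun i => x0 i / r0) 1 (fun i => x i / r0) <-> eball x0 r0 x.
Proof.
move=> r0_gt0; rewrite /eball /= expr1n.
under eq_bigr do rewrite -mulrBl exprMn exprVn.
by rewrite -mulr_suml ltr_pdivrMr ?exprn_gt0 // mul1r.
Qed.

Lemma St_unit_bump (beta : \bar R) (x0 : Rn R n) r0 x : 0 < r0 ->
  ((r0 `^ (n%:R * inv_exp beta) * 3 ^+ n)%:C *
     St beta r0 (unit_bump (fun i => x0 i / r0)) x = chiC (eball x0 r0) x)%C.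
Proof.
move=> r0_gt0; rewrite /St /unit_bump /chiC -!rmorphM /=; congr (_%:C)%C.
rewrite (indic_eq (eball_scale x0 x r0_gt0)) powRN; field.
by rewrite expf_neq0 // gt_eqF // powR_gt0.
Qed.

End UnitBump.

Lemma H_norm_chi_eball_le (R : realType) n (q t : 'I_n -> \bar R) (beta : \bar R)
    (x0 : Rn R n) (r0 : R) :
  (forall i, (1 <= q i)%E) -> (forall i, (1 <= t i)%E) -> 0 < r0 ->
  (H_norm q t beta (chiC (eball x0 r0)) <=
     (3 ^+ n * r0 `^ (n%:R * inv_exp beta))%:E)%E.
Proof.
move=> q1 t1 r0_gt0; set C := r0 `^ (n%:R * inv_exp beta) * 3 ^+ n.
have C0 : 0 <= C by rewrite mulr_ge0 ?powR_ge0 ?exprn_ge0.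
pose c j : R[i] := if j == 0%N then C%:C%C else 0.
pose f := unit_bump (fun i => x0 i / r0).
have sum_c : (\sum_(j <oo) (cabs (c j))%:E = C%:E)%E.
  rewrite (@nneseries_split _ _ 0 1) => [|k _]; last by rewrite lee_fin cabs_ge0.
  rewrite big_nat1 eseries0 ?adde0 => [|j j1 _]; first by rewrite cabs_real.
  by rewrite /c; case: eqP j1 => [->|_ _]; rewrite ?cabs_real.
apply: (@le_trans _ _ C%:E); last by rewrite lee_fin mulrC.
apply: ereal_inf_lbound; exists c, (fun=> r0), (fun=> f); split => //; split => //.
- move=> j; split; first exact: L1loc_unit_bump.
  by rewrite (le_lt_trans _ (ltry 1)) ?amalgam_norm_unit_bump_le1.
- by move=> j; exact: amalgam_norm_unit_bump_le1.
- by rewrite sum_c ltry.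
move=> rho rho0; apply: cvg_near_cst; exists 1%N => // [[|N]] // _.
apply: mixedL_eq0 => // x.
rewrite big_ord_recl big1 ?addr0 => [|j _]; last by rewrite mul0r.
by rewrite St_unit_bump // subrr cabs_real ?mul0r.
Qed.

Theorem proposition7p1 (R : realType) (n : nat) (p s : 'I_n -> \bar R)
  (alpha : \bar R) :
  (0 < n)%N ->
  (forall i, (1 <= p i)%E) -> (forall i, (1 <= s i)%E) ->
  (0 < alpha)%E ->
  0 <= (\sum_(i < n) inv_exp (s i)) / n%:R ->
  (\sum_(i < n) inv_exp (s i)) / n%:R <= inv_exp alpha ->
  inv_exp alpha <= (\sum_(i < n) inv_exp (p i)) / n%:R ->
  (\sum_(i < n) inv_exp (p i)) / n%:R < 1 ->
  exists C : R, 0 < C /\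
    forall (x0 : Rn R n) (r0 : R), 0 < r0 ->
      (morrey_norm p s alpha (chiC (eball x0 r0))
         <= C%:E * (r0 `^ (n%:R * inv_exp alpha))%:E)%E /\
      (H_norm (fun i => conj_exp (p i)) (fun i => conj_exp (s i))
         (conj_exp alpha) (chiC (eball x0 r0))
         <= C%:E * (r0 `^ (n%:R * inv_exp (conj_exp alpha)))%:E)%E.
Proof.
move=> n_gt0 p1 s1 _ _ Sa aP _.
have [Cm Cm_gt0 morrey] := morrey_norm_chi_eball_le n_gt0 p1 s1 Sa aP.
exists (Cm + 3 ^+ n); split => [|x0 r0 r0_gt0]; first by rewrite addr_gt0 ?exprn_gt0.
have q1 i := conj_exp_ge1 (p1 i); have t1 i := conj_exp_ge1 (s1 i).
split; rewrite -EFinM.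
- apply: le_trans (morrey x0 r0 r0_gt0) _.
  by rewrite lee_fin ler_wpM2r ?powR_ge0 // lerDl exprn_ge0.
- apply: le_trans (H_norm_chi_eball_le (conj_exp alpha) x0 q1 t1 r0_gt0) _.
  by rewrite lee_fin ler_wpM2r ?powR_ge0 // lerDr ltW.
Qed.
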